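(* There is a constant $C>0$ (depending only on $d_{\min}$ and $d_{\max}$) such that for all sufficiently large $n$, for every target set size $t$ and every choice of out-degrees, and for all $k$ with $(1-\frac{1}{e^2})n\le k\le n-1$, the probability that the reverse reachable set of $B$ has exactly $k$ vertices is at most $\frac{C}{n^2}$; i.e., it is $O(\frac{1}{n^2})$.
   Context: Random graph model: $V$ is a set of $n$ vertices, $B\subseteq V$ a target set with $|B|=t$, each $v\in V$ has a prescribed out-degree $d_v$ with $2\le d_{\min}\le d_v\le d_{\max}$ (constants independent of $n$), and for each $v$ independently its out-neighbour set is chosen uniformly at random among all $d_v$-element subsets of $V$. The reverse reachable set of $B$ is the set of vertices having a directed path to a vertex of $B$. *)

From mathcomp Require Import all_boot.
From Stdlib Require Import Reals.

Set Implicit Arguments.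
Unset Strict Implicit.
Unset Printing Implicit Defensive.

(* An outcome of the random graph is the family of
   out-neighbour sets N v (for each v), i.e. a finite function
   V -> {set V}. *)
Definition outcomes (n : nat) (d : 'I_n -> nat)
  : {set {ffun 'I_n -> {set 'I_n}}} :=
  [set N : {ffun 'I_n -> {set 'I_n}} | [forall v, #|N v| == d v]].

Definition arc (n : nat) (N : {ffun 'I_n -> {set 'I_n}}) : rel 'I_n :=
  fun u w => w \in N u.

Definition rrs (n : nat) (N : {ffun 'I_n -> {set 'I_n}}) (B : {set 'I_n})
  : {set 'I_n} :=
  [set v | [exists b in B, connect (arc N) v b]].

(* Each N v is chosen independently and uniformly among d v-subsets, so the
   joint law is uniform on [outcomes n d]; the probability of an event is a
   ratio of cardinalities. *)
Definition prob_rrs_size (n : nat) (d : 'I_n -> nat) (B : {set 'I_n}) (k : nat)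
  : R :=
  (INR #|[set N in outcomes d | #|rrs N B| == k]| / INR #|outcomes d|)%R.

From Stdlib Require Import Lra Lia.
From mathcomp Require Import zify.
From mathcomp Require Import all_boot.
From Stdlib Require Import Reals.

Set Implicit Arguments.
Unset Strict Implicit.

Local Notation "m ^ n" := (expn m n) : nat_scope.

(* The complement S of the reverse reachable set is closed: no arc leaves S.
   A vertex of S with out-degree d >= 2 keeps all its out-neighbours in S with
   probability C(|S|, d) / C(n, d) <= (|S| / n)^2, so a fixed j-set is closed
   with probability at most (j / n)^(2j), and the event |rrs| = n - j has
   probability at most C(n, j) (j / n)^(2j).  Going from j to j + 1 multiplies
   C(n, j) j^(2j) by at most n (j + 1) (1 + 1/j)^(2j) <= e^2 (j + 1) n <= n^2
   as long as e^2 (j + 1) <= n, so starting from C(n, 2) 2^4 <= 8 n^2 the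
   bound stays below 8 / n^2 on the whole range e^2 j <= n. *)

Lemma card_ffun_set_family n (F : 'I_n -> {set {set 'I_n}}) :
  #|[set N : {ffun 'I_n -> {set 'I_n}} | [forall v, N v \in F v]]|
    = \prod_v #|F v|.
Proof.
have := @card_family _ (fun _ => {set 'I_n}) (fun v => [pred A | A \in F v]).
rewrite foldrE big_image => <-; apply: eq_card => N; rewrite inE.
by apply/forallP/familyP.
Qed.

Lemma card_outcomes n (d : 'I_n -> nat) : #|outcomes d| = \prod_v 'C(n, d v).
Proof.
have -> : outcomes d = [set N : {ffun 'I_n -> {set 'I_n}} |
                          [forall v, N v \in [set A : {set 'I_n} | #|A| == d v]]].
  by apply/setP => N; rewrite !inE; apply: eq_forallb => v; rewrite inE.
rewrite card_ffun_set_family; apply: eq_bigr => v _.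
by rewrite card_draws card_ord.
Qed.

Definition closed_outcomes n (d : 'I_n -> nat) (S : {set 'I_n}) :=
  [set N in outcomes d | [forall v in S, N v \subset S]].

Lemma card_closed_outcomes n (d : 'I_n -> nat) S :
  #|closed_outcomes d S|
    = \prod_v (if v \in S then 'C(#|S|, d v) else 'C(n, d v)).
Proof.
pose F v := if v \in S then [set A : {set 'I_n} | A \subset S & #|A| == d v]
            else [set A : {set 'I_n} | #|A| == d v].
have -> : closed_outcomes d S
          = [set N : {ffun 'I_n -> {set 'I_n}} | [forall v, N v \in F v]].
  apply/setP => N; rewrite !inE /F.
  apply/andP/forallP => [[/forallP dN /forallP cN] v | FN].
    by move: (dN v) (cN v); case: (v \in S); rewrite inE //= => -> ->.
  by split; apply/forallP => v; move: (FN v); case: (v \in S);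
    rewrite inE //= => /andP[].
rewrite card_ffun_set_family; apply: eq_bigr => v _; rewrite /F.
by case: (v \in S); rewrite ?cards_draws ?card_draws ?card_ord.
Qed.

Lemma complement_rrs_closed n (d : 'I_n -> nat) B N :
  N \in outcomes d -> N \in closed_outcomes d (~: rrs N B).
Proof.
move=> dN; rewrite inE dN /=; apply/forall_inP => v vS.
apply/subsetP => x Nvx; move: vS; rewrite !inE; apply: contra.
case/exists_inP => b Bb xb; apply/exists_inP; exists b => //.
exact: connect_trans (connect1 Nvx) xb.
Qed.

(* [subset_weight j / n^2] bounds the probability that a uniform d-subset of
   an n-set (d >= 2) lies inside a fixed j-set; it is 0 for j < 2. *)
Definition subset_weight (j : nat) := j ^ 2 * (1 < j).

Lemma mul_bin_sub2 m e :
  'C(m.+2, e.+2) * (e.+2 * e.+1) = m.+2 * m.+1 * 'C(m, e).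
Proof.
have := mul_bin_diag m.+2 e.+1; have := mul_bin_diag m.+1 e; rewrite /= => h1 h2.
nia.
Qed.

Lemma bin_mul_sq_le j n d : 2 <= d -> j <= n ->
  'C(j, d) * n ^ 2 <= subset_weight j * 'C(n, d).
Proof.
move=> d2 jn; rewrite /subset_weight.
case: j jn => [|[|j]] jn; try by rewrite bin_small ?mul0n //; lia.
case: n jn => [|[|n]] // jn.
case: d d2 => [|[|e]] // _; rewrite muln1.
rewrite -(leq_pmul2r (_ : 0 < e.+2 * e.+1)) // mulnAC mul_bin_sub2.
rewrite -[X in _ <= X]mulnA mul_bin_sub2.
have binC : 'C(j, e) <= 'C(n, e) by apply: leq_bin2l; lia.
have factors : j.+2 * j.+1 * n.+2 ^ 2 <= j.+2 ^ 2 * (n.+2 * n.+1).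
  rewrite -!mulnn mulnACA [X in _ <= X]mulnACA leq_mul2l; apply/orP; right.
  nia.
apply: (@leq_trans (j.+2 * j.+1 * n.+2 ^ 2 * 'C(n, e))).
  by rewrite mulnAC leq_mul2l binC orbT.
by rewrite [X in _ <= X]mulnA leq_mul2r factors orbT.
Qed.

Lemma card_closed_outcomes_le n (d : 'I_n -> nat) S : (forall v, 2 <= d v) ->
  #|closed_outcomes d S| * n ^ (2 * #|S|)
    <= subset_weight #|S| ^ #|S| * #|outcomes d|.
Proof.
move=> d2; have Sn : #|S| <= n by rewrite -[n in _ <= n]card_ord max_card.
rewrite card_closed_outcomes card_outcomes mulnC expnM.
rewrite -!prod_nat_const big_mkcond [X in _ <= X * _]big_mkcond -!big_split /=.
apply: leq_prod => v _; case: (v \in S); last by rewrite mul1n.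
by rewrite mulnC bin_mul_sq_le.
Qed.

Lemma card_rrs_size_le n (d : 'I_n -> nat) B k : (forall v, 2 <= d v) ->
  #|[set N in outcomes d | #|rrs N B| == k]| * n ^ (2 * (n - k))
    <= 'C(n, n - k) * (subset_weight (n - k) ^ (n - k) * #|outcomes d|).
Proof.
move=> d2; set j := n - k; set P := [set S : {set 'I_n} | #|S| == j].
have cover : #|[set N in outcomes d | #|rrs N B| == k]|
             <= \sum_(S in P) #|closed_outcomes d S|.
  rewrite -sum1_card.
  apply: (@leq_trans (\sum_(N in [set N in outcomes d | #|rrs N B| == k])
                        \sum_(S in P) (N \in closed_outcomes d S : nat))).
    apply: leq_sum => N; rewrite inE => /andP[dN /eqP rrs_k].
    rewrite (bigD1 (~: rrs N B)) /=; last by rewrite inE cardsCs setCK card_ord rrs_k.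
    by rewrite complement_rrs_closed.
  apply: (@leq_trans (\sum_N \sum_(S in P) (N \in closed_outcomes d S : nat))).
    by rewrite [X in _ <= X](bigID [in [set N in outcomes d | #|rrs N B| == k]]) leq_addr.
  rewrite exchange_big; apply: leq_sum => S _.
  by rewrite -sum1_card [X in _ <= X]big_mkcond; apply: leq_sum => N _; case: ifP.
apply: (@leq_trans ((\sum_(S in P) #|closed_outcomes d S|) * n ^ (2 * j))).
  by rewrite leq_mul2r cover orbT.
rewrite big_distrl /= -[P in 'C(P, _)]card_ord -card_draws -sum_nat_const.
by apply: leq_sum => S; rewrite inE => /eqP <-; apply: card_closed_outcomes_le.
Qed.

Section RealBounds.
Local Open Scope R_scope.

Lemma INR_expn (a b : nat) : INR (a ^ b)%nat = INR a ^ b.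
Proof. by elim: b => [|b IH]; rewrite ?expn0 // expnS mult_INR IH. Qed.

Lemma INR_le_nat (a b : nat) : (a <= b)%nat -> INR a <= INR b.
Proof. by move/leP; apply: le_INR. Qed.

Lemma pow_succ_le_exp2 (m : nat) : (0 < m)%nat ->
  INR m.+1 ^ (2 * m) <= exp 2 * INR m ^ (2 * m).
Proof.
move=> m_gt0; have m_pos : 0 < INR m by apply: lt_0_INR; apply/ltP.
have inv_pos : 0 < / INR m by apply: Rinv_0_lt_compat.
have succ_eq : INR m.+1 = INR m * (1 + / INR m) by rewrite S_INR; field; lra.
have succ_le : (1 + / INR m) ^ m <= exp 1.
  have -> : exp 1 = exp (/ INR m) ^ m.
    rewrite -Rpower_pow; last exact: exp_pos.
    by rewrite /Rpower ln_exp; congr exp; field; lra.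
  by apply: pow_incr; split; [lra | apply: exp_ineq1_le].
rewrite succ_eq Rpow_mult_distr Rmult_comm; apply: Rmult_le_compat_r.
  by apply: pow_le; lra.
have -> : exp 2 = exp 1 ^ 2 by rewrite /= Rmult_1_r -exp_plus; congr exp; lra.
rewrite mulnC pow_mult; apply: pow_incr; split => //.
by apply: pow_le; lra.
Qed.

Lemma bin_pow_succ_le (n m : nat) : (0 < m)%nat -> exp 2 * INR m.+1 <= INR n ->
  INR 'C(n, m.+1) * INR m.+1 ^ (2 * m.+1)
    <= INR n ^ 2 * (INR 'C(n, m) * INR m ^ (2 * m)).
Proof.
move=> m_gt0 mn.
have bin_succ : INR 'C(n, m.+1) * INR m.+1 <= INR n * INR 'C(n, m).
  have : ('C(n, m.+1) * m.+1 <= n * 'C(n, m))%nat.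
    by rewrite mulnC mul_bin_left leq_mul2r leq_subr orbT.
  by move/INR_le_nat; rewrite !mult_INR.
have pow_succ := pow_succ_le_exp2 m_gt0.
have -> : INR m.+1 ^ (2 * m.+1) = INR m.+1 * (INR m.+1 * INR m.+1 ^ (2 * m)).
  by rewrite (_ : (2 * m.+1 = (2 * m).+2)%nat) //; lia.
have c0 := pos_INR 'C(n, m); have c1 := pos_INR 'C(n, m.+1).
have m1 := pos_INR m.+1; have n0 := pos_INR n.
have q0 : 0 <= INR m ^ (2 * m) by apply: pow_le; apply: pos_INR.
have p0 : 0 <= INR m.+1 ^ (2 * m) by apply: pow_le.
apply: (Rle_trans _ (INR n * INR 'C(n, m) * (INR m.+1 * (exp 2 * INR m ^ (2 * m))))).
  by rewrite -Rmult_assoc; apply: Rmult_le_compat; nra.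
have -> : INR n * INR 'C(n, m) * (INR m.+1 * (exp 2 * INR m ^ (2 * m)))
          = (exp 2 * INR m.+1) * (INR n * (INR 'C(n, m) * INR m ^ (2 * m))) by ring.
rewrite (_ : INR n ^ 2 = INR n * INR n); last by ring.
rewrite [X in _ <= X]Rmult_assoc; apply: Rmult_le_compat_r => //.
by apply: Rmult_le_pos => //; apply: Rmult_le_pos.
Qed.

Lemma bin_pow_le (n i : nat) : exp 2 * INR i.+2 <= INR n ->
  INR 'C(n, i.+2) * INR i.+2 ^ (2 * i.+2) <= 8 * INR n ^ (2 * i.+1).
Proof.
have e2_pos := exp_pos 2.
elim: i => [|i IH] i_le_n.
  have : ('C(n, 2) * 2 <= n ^ 2)%nat.
    rewrite mulnC -mul_bin_diag bin1 expnS expn1 leq_mul2l.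
    by rewrite leq_pred orbT.
  by move/INR_le_nat; rewrite mult_INR INR_expn /=; nra.
apply: (Rle_trans _ _ _ (bin_pow_succ_le (ltn0Sn i.+1) i_le_n)).
have n0 := pos_INR n; have -> : INR n ^ (2 * i.+2) = INR n ^ 2 * INR n ^ (2 * i.+1).
  by rewrite -pow_add; congr pow; lia.
rewrite (Rmult_comm 8) Rmult_assoc; apply: Rmult_le_compat_l; first exact: pow_le.
rewrite [X in _ <= X]Rmult_comm; apply: IH; rewrite S_INR in i_le_n; nra.
Qed.

Lemma bin_weight_le (n j : nat) : (0 < j)%nat -> exp 2 * INR j <= INR n ->
  INR 'C(n, j) * INR (subset_weight j) ^ j <= 8 * INR n ^ (2 * j.-1).
Proof.
case: j => [|[|i]] // _ jn; first by rewrite /subset_weight muln0 /=; lra.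
by rewrite /subset_weight muln1 INR_expn -pow_mult; apply: bin_pow_le.
Qed.

(* Also covers [t = 0], where Rocq's division gives [a / 0 = 0]. *)
Lemma Rdiv_le_div_cross (a t c y : R) :
  0 <= c -> 0 < y -> 0 <= t -> a * y <= c * t -> a / t <= c / y.
Proof.
move=> c0 y0 t0 acty; have [-> | t_pos] := Req_dec t 0.
  rewrite /Rdiv Rinv_0 Rmult_0_r; apply: Rmult_le_pos => //.
  exact/Rlt_le/Rinv_0_lt_compat.
apply: (Rmult_le_reg_r (t * y)); first nra.
have -> : a / t * (t * y) = a * y by field.
by have -> : c / y * (t * y) = c * t by field; lra.
Qed.

End RealBounds.

Lemma prob_rrs_size_le n (d : 'I_n -> nat) B k : (forall v, 2 <= d v) ->
  0 < n - k -> (exp 2 * INR (n - k) <= INR n)%R ->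
  (prob_rrs_size d B k <= 8 / INR n ^ 2)%R.
Proof.
move=> d2 j_gt0 jn; have n_pos : (0 < INR n)%R by apply/lt_0_INR/ltP; lia.
have count := INR_le_nat (card_rrs_size_le B k d2).
rewrite !mult_INR !INR_expn in count.
have weight := bin_weight_le j_gt0 jn.
apply: Rdiv_le_div_cross; [lra | exact: pow_lt | exact: pos_INR |].
have split_pow : (INR n ^ (2 * (n - k)) = INR n ^ (2 * (n - k).-1) * INR n ^ 2)%R.
  by rewrite -pow_add; congr pow; lia.
rewrite split_pow in count.
have M_pos : (0 < INR n ^ (2 * (n - k).-1))%R by apply: pow_lt.
have T0 := pos_INR #|outcomes d|.
apply: (Rmult_le_reg_l _ _ _ M_pos); nra.
Qed.

Theorem lemma18 (dmin dmax : nat) (Hdmin : 2 <= dmin) (Hd : dmin <= dmax) :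
  exists C : R, (0 < C)%R /\
  exists n0 : nat, forall n : nat, n0 <= n ->
  forall (t : nat) (B : {set 'I_n}), #|B| = t ->
  forall d : 'I_n -> nat, (forall v, dmin <= d v <= dmax) ->
  forall k : nat,
    ((1 - 1 / exp 2) * INR n <= INR k)%R -> k <= n - 1 ->
    (prob_rrs_size d B k <= C / (INR n ^ 2))%R.
Proof.
exists 8%R; split; first lra.
exists 1 => n n_gt0 t B _ d d_range k k_large k_lt_n.
have e2_pos := exp_pos 2.
apply: prob_rrs_size_le.
- by move=> v; case/andP: (d_range v) => dmin_le _; apply: leq_trans dmin_le.
- lia.
- rewrite minus_INR; last by apply/leP; lia.
  apply: (Rle_trans _ (exp 2 * (INR n / exp 2))); last by right; field; lra.
  apply: Rmult_le_compat_l; first lra.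
  have -> : (INR n / exp 2 = INR n - (1 - 1 / exp 2) * INR n)%R by field; lra.
  lra.
Qed.
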